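(* Let $(H_1,+_1,\circ_1)$ and $(H_2,+_2,\circ_2)$ be commutative multiplicative hyperrings with identity. Let $P_1$ be a weakly sdf-absorbing strong $\mathcal{C}$-hyperideal of $H_1$ that is not an sdf-absorbing hyperideal, and let $P_2$ be a weakly sdf-absorbing strong $\mathcal{C}$-hyperideal of $H_2$ that is not an sdf-absorbing hyperideal. Then the following are equivalent: (i) $P_1\times P_2$ is a weakly sdf-absorbing hyperideal of $H_1\times H_2$ but is not an sdf-absorbing hyperideal; (ii) $P_1\times P_2$ is a weakly sdf-absorbing hyperideal of $H_1\times H_2$; (iii) if $x^2-y^2\subseteq P_1$ for $x,y\in H_1$, then $0\in x^2-y^2$, and if $u^2-v^2\subseteq P_2$ for $u,v\in H_2$, then $0\in u^2-v^2$; (iv) if $a^2-b^2\subseteq P_1\times P_2$ for $(0,0)\neq a,b\in H_1\times H_2$, then $(0,0)\in a^2-b^2$.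
   Context: A commutative multiplicative hyperring $(H,+,\circ)$ consists of an abelian group $(H,+)$ and an associative, commutative hyperoperation $\circ: H\times H\to P^*(H)$ with $x\circ(y+z)\subseteq x\circ y+x\circ z$ and $x\circ(-y)=-(x\circ y)=(-x)\circ y$. For subsets $A,B$, $A\circ B=\bigcup_{a\in A,b\in B}a\circ b$, $A\pm B=\{a\pm b\}$; $x^2=x\circ x$. Identity: $x\in x\circ 1$ for all $x$. $H_1\times H_2$ is the hyperring with $(x_1,x_2)+(y_1,y_2)=(x_1+_1y_1,x_2+_2y_2)$ and $(x_1,x_2)\circ(y_1,y_2)=\{(a,b): a\in x_1\circ_1y_1, b\in x_2\circ_2y_2\}$. A hyperideal is a nonempty $P$ with $x-y\in P$ and $r\circ x\subseteq P$ for $x,y\in P$, $r\in H$. Let $\mathcal{C}=\{c_1\circ\cdots\circ c_n: c_i\in H\}$ and $\mathfrak{C}=\{\sum_{i=1}^m C_i: C_i\in\mathcal{C}\}$; $P$ is a strong $\mathcal{C}$-hyperideal if for every $D\in\mathfrak{C}$, $D\cap P\neq\varnothing$ implies $D\subseteq P$. A proper hyperideal $P$ is sdf-absorbing if whenever $x,y$ are nonzero and $x^2-y^2\subseteq P$, then $x-y\in P$ or $x+y\in P$; it is weakly sdf-absorbing if whenever $x,y$ are nonzero and $0\notin x^2-y^2\subseteq P$, then $x-y\in P$ or $x+y\in P$. *)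

From mathcomp Require Import all_boot all_algebra.
Set Implicit Arguments. Unset Strict Implicit. Unset Printing Implicit Defensive.
Import GRing.Theory.
Local Open Scope ring_scope.

(* A hyperoperation on H is given by its graph: [hm x y z] means z \in x o y. *)
Definition hset (H : Type) := H -> Prop.
Definition hyperop (H : Type) := H -> H -> hset H.

Section Hyper.
Variable H : zmodType.
Variable hm : hyperop H.

Definition hsing (x : H) : hset H := fun z => z = x.
Definition hsubset (A B : hset H) : Prop := forall z, A z -> B z.
Definition hmulS (A B : hset H) : hset H :=
  fun z => exists a b, [/\ A a, B b & hm a b z].
Definition haddS (A B : hset H) : hset H :=
  fun z => exists a b, [/\ A a, B b & z = a + b].
Definition hsubS (A B : hset H) : hset H :=
  fun z => exists a b, [/\ A a, B b & z = a - b].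
Definition hsq (x : H) : hset H := hm x x.

Definition comMHyperringId : Prop :=
  (forall x y, exists z, hm x y z) /\ 
      (forall x y z w, hmulS (hmulS (hsing x) (hsing y)) (hsing z) w <->
                       hmulS (hsing x) (hmulS (hsing y) (hsing z)) w) /\
      (forall x y z, hm x y z <-> hm y x z) /\
      (forall x y z w, hm x (y + z) w -> haddS (hm x y) (hm x z) w) /\
      (forall x y w, hm x (- y) w <-> hm x y (- w)) /\
      (forall x y w, hm (- x) y w <-> hm x y (- w)) /\
      (exists one : H, forall x, hm x one x).

Definition hyperideal (P : hset H) : Prop :=
  [/\ exists x, P x,
      (forall x y, P x -> P y -> P (x - y))
    & (forall r x z, P x -> hm r x z -> P z)].

Definition proper_hyperideal (P : hset H) : Prop :=
  hyperideal P /\ exists x, ~ P x.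

(* c_1 o c_2 o ... o c_n, an element of the family C *)
Definition Cprod (c : H) (cs : seq H) : hset H :=
  foldl (fun A d => hmulS A (hsing d)) (hsing c) cs.
(* C_1 + ... + C_m with C_i in C, an element of the family frak C *)
Definition Csum (t : H * seq H) (ts : seq (H * seq H)) : hset H :=
  foldl (fun A u => haddS A (Cprod u.1 u.2)) (Cprod t.1 t.2) ts.

Definition strongC (P : hset H) : Prop :=
  forall t ts, (exists z, Csum t ts z /\ P z) -> hsubset (Csum t ts) P.

Definition sdf_absorbing (P : hset H) : Prop :=
  proper_hyperideal P /\
  forall x y, x != 0 -> y != 0 -> hsubset (hsubS (hsq x) (hsq y)) P ->
    P (x - y) \/ P (x + y).

Definition weakly_sdf_absorbing (P : hset H) : Prop :=
  proper_hyperideal P /\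
  forall x y, x != 0 -> y != 0 -> ~ hsubS (hsq x) (hsq y) 0 ->
    hsubset (hsubS (hsq x) (hsq y)) P -> P (x - y) \/ P (x + y).

End Hyper.

Definition prod_hyperop (H1 H2 : zmodType) (hm1 : hyperop H1) (hm2 : hyperop H2)
  : hyperop (H1 * H2) :=
  fun x y z => hm1 x.1 y.1 z.1 /\ hm2 x.2 y.2 z.2.

Definition prod_set (H1 H2 : Type) (P1 : hset H1) (P2 : hset H2) : hset (H1 * H2) :=
  fun z => P1 z.1 /\ P2 z.2.

From mathcomp Require Import all_boot all_algebra.
From Stdlib Require Import Classical.
Set Implicit Arguments. Unset Strict Implicit. Unset Printing Implicit Defensive.
Import GRing.Theory.
Local Open Scope ring_scope.

(* In H1 x H2 the set a^2 - b^2 is the product of the componentwise sets, so it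
   lies in P1 x P2 iff its components lie in P1 and P2, and it contains 0 iff both
   components do.  Pairing x, y in H1 with a witness u, v that P2 is not
   sdf-absorbing, weak sdf-absorption of P1 x P2 forces 0 in x^2 - y^2 as soon
   as x^2 - y^2 is in P1: otherwise (x, u) +- (y, v) would lie in P1 x P2, hence
   u +- v in P2.  Conversely (iii) makes the weak condition on the product
   vacuous, and a witness for P1 paired with (0, 0) shows that P1 x P2 is never
   sdf-absorbing. *)

Section Hyperring.
Variables (H : zmodType) (hm : hyperop H).

Lemma hyperideal0 (P : hset H) : hyperideal hm P -> P 0.
Proof. by case=> -[p Pp] subP _; rewrite -(subrr p); apply: subP. Qed.

Lemma hsq_diff_sub_ideal (P : hset H) (x y : H) :
  hyperideal hm P -> P x -> P y -> hsubset (hsubS (hsq hm x) (hsq hm y)) P.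
Proof.
case=> _ subP absP Px Py _ [a [b [xxa yyb ->]]].
by apply: subP; [apply: absP Px xxa | apply: absP Py yyb].
Qed.

Lemma hsq_diff_nonempty (x y : H) :
  comMHyperringId hm -> exists z, hsubS (hsq hm x) (hsq hm y) z.
Proof.
case=> hm_total _; have [a xxa] := hm_total x x; have [b yyb] := hm_total y y.
by exists (a - b), a, b.
Qed.

Lemma not_sdf_absorbing_witness (P : hset H) :
  proper_hyperideal hm P -> ~ sdf_absorbing hm P ->
  exists x y : H, [/\ x != 0, y != 0, hsubset (hsubS (hsq hm x) (hsq hm y)) P,
                      ~ P (x - y) & ~ P (x + y)].
Proof.
move=> properP not_sdf; apply: NNPP => no_wit; apply: not_sdf.
split=> // x y x_neq0 y_neq0 sub; apply: NNPP => not_abs; apply: no_wit.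
by exists x, y; split=> // ?; apply: not_abs; [left | right].
Qed.

End Hyperring.

Section Product.
Variables (H1 H2 : zmodType) (hm1 : hyperop H1) (hm2 : hyperop H2).
Variables (P1 : hset H1) (P2 : hset H2).
Local Notation hm := (prod_hyperop hm1 hm2).
Local Notation P := (prod_set P1 P2).

Lemma pair_neq0l (x : H1) (u : H2) : x != 0 -> (x, u) != 0.
Proof. by apply: contra => /eqP[->]. Qed.

Lemma pair_neq0r (x : H1) (u : H2) : u != 0 -> (x, u) != 0.
Proof. by apply: contra => /eqP[_ ->]. Qed.

Lemma hsq_diff_prod (a b z : H1 * H2) :
  hsubS (hsq hm a) (hsq hm b) z <->
  hsubS (hsq hm1 a.1) (hsq hm1 b.1) z.1 /\ hsubS (hsq hm2 a.2) (hsq hm2 b.2) z.2.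
Proof.
split.
- move=> [a' [b' [[aa1 aa2] [bb1 bb2] ->]]].
  by split; [exists a'.1, b'.1 | exists a'.2, b'.2].
- case: z => z1 z2 [[a1 [b1 [aa1 bb1 /= ->]]] [a2 [b2 [aa2 bb2 /= ->]]]].
  by exists (a1, a2), (b1, b2).
Qed.

Lemma hsq_diff_prod_sub (a b : H1 * H2) :
  hsubset (hsubS (hsq hm1 a.1) (hsq hm1 b.1)) P1 ->
  hsubset (hsubS (hsq hm2 a.2) (hsq hm2 b.2)) P2 ->
  hsubset (hsubS (hsq hm a) (hsq hm b)) P.
Proof. by move=> sub1 sub2 z /hsq_diff_prod[/sub1 ? /sub2 ?]. Qed.

Lemma hsq_diff_prod_sub_inv (a b : H1 * H2) :
  comMHyperringId hm1 -> comMHyperringId hm2 ->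
  hsubset (hsubS (hsq hm a) (hsq hm b)) P ->
  hsubset (hsubS (hsq hm1 a.1) (hsq hm1 b.1)) P1 /\
  hsubset (hsubS (hsq hm2 a.2) (hsq hm2 b.2)) P2.
Proof.
move=> R1 R2 sub; have [z1 d1] := hsq_diff_nonempty a.1 b.1 R1.
have [z2 d2] := hsq_diff_nonempty a.2 b.2 R2.
split=> [z d | z d].
- by have [] := sub (z, z2) (proj2 (hsq_diff_prod a b (z, z2)) (conj d d2)).
- by have [] := sub (z1, z) (proj2 (hsq_diff_prod a b (z1, z)) (conj d1 d)).
Qed.

Lemma proper_hyperideal_prod :
  proper_hyperideal hm1 P1 -> hyperideal hm2 P2 -> proper_hyperideal hm P.
Proof.
move=> [[[p1 Pp1] sub1 abs1] [q1 notPq1]] idP2.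
have [[p2 Pp2] sub2 abs2] := idP2.
split; last by exists (q1, 0) => -[].
split; first by exists (p1, p2).
- by move=> x y [? ?] [? ?]; split; [apply: sub1 | apply: sub2].
- by move=> r x z [Px1 Px2] [rxz1 rxz2]; split; [apply: abs1 rxz1 | apply: abs2 rxz2].
Qed.

Lemma prod_not_sdf_absorbing :
  proper_hyperideal hm1 P1 -> hyperideal hm2 P2 -> ~ sdf_absorbing hm1 P1 ->
  ~ sdf_absorbing hm P.
Proof.
move=> properP1 idP2 /(not_sdf_absorbing_witness properP1)[x [y [xn yn sub notPm notPp]]].
case=> _ /(_ (x, 0) (y, 0) (pair_neq0l _ xn) (pair_neq0l _ yn)).
have P20 := hyperideal0 idP2.
case; first by apply: hsq_diff_prod_sub; last exact: (hsq_diff_sub_ideal idP2 P20 P20).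
- by case.
- by case.
Qed.

Lemma weakly_sdf_prod_zero_diffl :
  proper_hyperideal hm2 P2 -> ~ sdf_absorbing hm2 P2 -> weakly_sdf_absorbing hm P ->
  forall x y : H1, hsubset (hsubS (hsq hm1 x) (hsq hm1 y)) P1 ->
    hsubS (hsq hm1 x) (hsq hm1 y) 0.
Proof.
move=> properP2 /(not_sdf_absorbing_witness properP2)[u [v [un vn subu notPm notPp]]].
move=> [_ weakP] x y subx; apply: NNPP => not0.
have := weakP (x, u) (y, v) (pair_neq0r _ un) (pair_neq0r _ vn).
case; first by case/hsq_diff_prod.
- exact: hsq_diff_prod_sub.
- by case.
- by case.
Qed.

Lemma weakly_sdf_prod_zero_diffr :
  proper_hyperideal hm1 P1 -> ~ sdf_absorbing hm1 P1 -> weakly_sdf_absorbing hm P ->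
  forall u v : H2, hsubset (hsubS (hsq hm2 u) (hsq hm2 v)) P2 ->
    hsubS (hsq hm2 u) (hsq hm2 v) 0.
Proof.
move=> properP1 /(not_sdf_absorbing_witness properP1)[x [y [xn yn subx notPm notPp]]].
move=> [_ weakP] u v subu; apply: NNPP => not0.
have := weakP (x, u) (y, v) (pair_neq0l _ xn) (pair_neq0l _ yn).
case; first by case/hsq_diff_prod.
- exact: hsq_diff_prod_sub.
- by case.
- by case.
Qed.

End Product.

Theorem mainTheorem19 (H1 H2 : zmodType) (hm1 : hyperop H1) (hm2 : hyperop H2)
  (P1 : hset H1) (P2 : hset H2) :
  comMHyperringId hm1 -> comMHyperringId hm2 ->
  weakly_sdf_absorbing hm1 P1 -> strongC hm1 P1 -> ~ sdf_absorbing hm1 P1 ->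
  weakly_sdf_absorbing hm2 P2 -> strongC hm2 P2 -> ~ sdf_absorbing hm2 P2 ->
  let hm := prod_hyperop hm1 hm2 in
  let P := prod_set P1 P2 in
  let i := weakly_sdf_absorbing hm P /\ ~ sdf_absorbing hm P in
  let ii := weakly_sdf_absorbing hm P in
  let iii := (forall x y : H1, hsubset (hsubS (hsq hm1 x) (hsq hm1 y)) P1 ->
                hsubS (hsq hm1 x) (hsq hm1 y) 0) /\
             (forall u v : H2, hsubset (hsubS (hsq hm2 u) (hsq hm2 v)) P2 ->
                hsubS (hsq hm2 u) (hsq hm2 v) 0) in
  let iv := forall a b : H1 * H2, a != 0 -> b != 0 ->
              hsubset (hsubS (hsq hm a) (hsq hm b)) P ->
              hsubS (hsq hm a) (hsq hm b) 0 in
  (i <-> ii) /\ (ii <-> iii) /\ (iii <-> iv).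
Proof.
move=> R1 R2 [properP1 _] _ notsdf1 [properP2 _] _ notsdf2 hm P i ii iii iv.
have idP2 := proj1 properP2.
have ii_iii : ii -> iii.
  by move=> weakP; split;
    [exact: weakly_sdf_prod_zero_diffl properP2 notsdf2 weakP
    | exact: weakly_sdf_prod_zero_diffr properP1 notsdf1 weakP].
have iii_iv : iii -> iv.
  move=> [zero1 zero2] a b _ _ /(hsq_diff_prod_sub_inv R1 R2)[sub1 sub2].
  by apply/hsq_diff_prod; split; [apply: zero1 | apply: zero2].
have iv_ii : iv -> ii.
  move=> zeroP; split; first exact: proper_hyperideal_prod properP1 idP2.
  by move=> a b an bn not0 /(zeroP a b an bn).
have ii_i : ii -> i.
  by move=> weakP; split=> //; exact: prod_not_sdf_absorbing properP1 idP2 notsdf1.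
by split; [split=> [[]|] | split; split]; auto.
Qed.
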